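(* For every $A\in\mathcal{M}_n$ there exist $B\in\mathcal{M}_n$ such that none of $\alpha^B_1,\dots,\alpha^B_n$ is of even exceptional type, and a graded ring isomorphism $\psi\colon H^*(M(A);\mathbb{Z})\to H^*(M(B);\mathbb{Z})$ with $\psi(p(M(A)))=p(M(B))$, where $p$ denotes the total Pontrjagin class.
   Context: Let $\mathcal{M}_n$ be the set of integral strictly upper triangular $n\times n$ matrices $A=(A^i_j)$ ($A^i_j$ is the $(i,j)$ entry, and $A^i_j=0$ for $i\ge j$). For $A\in\mathcal{M}_n$, $M(A)$ denotes the Bott manifold obtained as the quotient of $(S^3)^n$ ($S^3\subset\mathbb{C}^2$ the unit sphere) by the free $(S^1)^n$-action $(g_1,\dots,g_n)\cdot((z_1,w_1),\dots,(z_n,w_n))=\big(((\prod_{k<j}g_k^{-A^k_j})g_jz_j,\ g_jw_j)\big)_{j=1}^n$. Let $x^A_j\in H^2(M(A);\mathbb{Z})$ be the first Chern class of the line bundle obtained as the quotient of $(S^3)^n\times\mathbb{C}$ where $g$ acts on the $\mathbb{C}$-factor by $g_j^{-1}$. Put $\alpha^A_j=\sum_{i<j}A^i_jx^A_i$. Then $H^*(M(A);\mathbb{Z})=\mathbb{Z}[x^A_1,\dots,x^A_n]/((x^A_j)^2-\alpha^A_jx^A_j\mid j=1,\dots,n)$. Define $y^A_j=x^A_j-\tfrac12\alpha^A_j\in H^2(M(A);\mathbb{Q})$. The same notation is used for $B$. We say $\alpha^B_j$ is of exceptional type if $\alpha^B_j=cy^B_i$ for some nonzero integer $c$ and some $i<j$,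 and of even exceptional type if moreover this integer $c$ is even. *)

From HB Require Import structures.
From mathcomp Require Import all_boot all_order all_algebra.
From mathcomp Require Import mpoly.
Set Implicit Arguments. Unset Strict Implicit. Unset Printing Implicit Defensive.
Import Order.TTheory GRing.Theory Num.Theory.
Local Open Scope ring_scope.

(* Indices are 0-based: 'I_n = {0,...,n-1} stands for {1,...,n}. *)

(* M_n : integral strictly upper triangular n x n matrices; A i j = A^i_j. *)
Definition strictly_upper (n : nat) (A : 'M[int]_n) : Prop :=
  forall i j : 'I_n, (j <= i)%N -> A i j = 0.

(* H^*(M(A);Z) is modelled as Z[x_1..x_n] / I_A, with x_j in cohomological
   degree 2 (polynomial degree 1).  alpha^A_j = sum_{i<j} A^i_j x_i. *)
Definition alpha (n : nat) (A : 'M[int]_n) (j : 'I_n) : {mpoly int[n]} :=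
  \sum_(i < n) (A i j)%:MP_[n] * 'X_i.

Definition inI (n : nat) (A : 'M[int]_n) (p : {mpoly int[n]}) : Prop :=
  exists c : 'I_n -> {mpoly int[n]},
    p = \sum_(j < n) c j * ('X_j ^+ 2 - alpha A j * 'X_j).

Definition pontrjagin (n : nat) (A : 'M[int]_n) : {mpoly int[n]} :=
  \prod_(j < n) (1 + alpha A j ^+ 2).

(* Rational versions in H^2(M(A);Q) (linear forms; the ideal has no
   degree-1 part, so H^2(M(A);Q) is identified with linear forms). *)
Definition alphaQ (n : nat) (A : 'M[int]_n) (j : 'I_n) : {mpoly rat[n]} :=
  \sum_(i < n) ((A i j)%:~R : rat) *: 'X_i.

Definition yQ (n : nat) (A : 'M[int]_n) (j : 'I_n) : {mpoly rat[n]} :=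
  'X_j - (2%:R^-1 : rat) *: alphaQ A j.

Definition even_exceptional (n : nat) (B : 'M[int]_n) (j : 'I_n) : Prop :=
  exists (i : 'I_n) (c : int),
    (i < j)%N /\ c != 0 /\ (2 %| c)%Z /\
    alphaQ B j = (c%:~R : rat) *: yQ B i.

(* A graded ring isomorphism H^*(M(A)) -> H^*(M(B)), presented by a
   degree-preserving ring morphism of polynomial rings inducing a
   bijection Z[x]/I_A -> Z[x]/I_B. *)
Definition graded_iso_induced (n : nat) (A B : 'M[int]_n)
    (phi : {rmorphism {mpoly int[n]} -> {mpoly int[n]}}) : Prop :=
  [/\ forall (d : nat) (p : {mpoly int[n]}),
        p \is d.-homog -> phi p \is d.-homog,
      forall p, inI A p -> inI B (phi p),
      forall p, inI B (phi p) -> inI A p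
    & forall q, exists p, inI B (phi p - q)].

From HB Require Import structures.
From mathcomp Require Import all_boot all_order all_algebra.
From mathcomp Require Import mpoly ring.
From Stdlib Require Import Classical_Prop.
Import Order.TTheory GRing.Theory Num.Theory.
Set Implicit Arguments. Unset Strict Implicit. Unset Printing Implicit Defensive.
Local Open Scope ring_scope.

(* If alpha_t = 2k y_i with i < t, then alpha_t = 2k x_i - k alpha_i, and the
   substitution x_t |-> x_t + k x_i carries the relations of M(A) onto those
   of M(A'), where A' has column t replaced by -k times column i (and row i
   changed in the columns after t).  It preserves the Pontrjagin class modulo
   the relations because k x_i (k x_i - alpha_t) = -k^2 (x_i^2 - alpha_i x_i).
   Column i of a strictly upper triangular matrix vanishes from row i on, so
   the last nonzero row of column t strictly decreases: finitely many such
   moves clear column t without touching earlier columns, and doing this for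
   t = 1, ..., n yields B. *)

Definition relator n (A : 'M[int]_n) (j : 'I_n) : {mpoly int[n]} :=
  'X_j ^+ 2 - alpha A j * 'X_j.

Section Ideal.
Variables (n : nat) (A : 'M[int]_n).

Lemma inI0 : inI A 0.
Proof. by exists (fun _ => 0); rewrite big1 // => j _; rewrite mul0r. Qed.

Lemma inID p q : inI A p -> inI A q -> inI A (p + q).
Proof.
move=> [c1 ->] [c2 ->]; exists (fun j => c1 j + c2 j).
by rewrite -big_split /=; apply: eq_bigr => j _; rewrite mulrDl.
Qed.

Lemma inIMl q p : inI A p -> inI A (q * p).
Proof.
move=> [c ->]; exists (fun j => q * c j).
by rewrite mulr_sumr; apply: eq_bigr => j _; rewrite mulrA.
Qed.

Lemma inI_relator j : inI A (relator A j).
Proof.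
exists (fun k => (k == j)%:R); rewrite (bigD1 j) //= eqxx mul1r big1 ?addr0 //.
by move=> k /negbTE ->; rewrite mul0r.
Qed.

Lemma inI_sum (I : Type) (r : seq I) (P : pred I) (F : I -> {mpoly int[n]}) :
  (forall i, P i -> inI A (F i)) -> inI A (\sum_(i <- r | P i) F i).
Proof. by move=> hF; apply: big_ind => //; [exact: inI0 | exact: inID]. Qed.

Lemma inI_prodB (I : Type) (r : seq I) (P : pred I) (F G : I -> {mpoly int[n]}) :
  (forall i, P i -> inI A (F i - G i)) ->
  inI A (\prod_(i <- r | P i) F i - \prod_(i <- r | P i) G i).
Proof.
move=> hFG; apply: (big_ind2 (fun x y => inI A (x - y))) => //.
- by rewrite subrr; exact: inI0.
- move=> x1 x2 y1 y2 hx hy.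
  have -> : x1 * y1 - x2 * y2 = y1 * (x1 - x2) + x2 * (y1 - y2) by ring.
  by apply: inID; apply: inIMl.
Qed.

End Ideal.

Lemma inI_rmorph n (A B : 'M[int]_n)
    (f : {rmorphism {mpoly int[n]} -> {mpoly int[n]}}) :
  (forall j, inI B (f (relator A j))) -> forall p, inI A p -> inI B (f p).
Proof.
move=> hf p [c ->]; rewrite rmorph_sum; apply: inI_sum => j _.
by rewrite rmorphM; apply/inIMl/hf.
Qed.

Definition pontrjagin_iso n (A B : 'M[int]_n) : Prop :=
  exists phi : {rmorphism {mpoly int[n]} -> {mpoly int[n]}},
    graded_iso_induced A B phi /\ inI B (phi (pontrjagin A) - pontrjagin B).

Lemma pontrjagin_iso_refl n (A : 'M[int]_n) : pontrjagin_iso A A.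
Proof.
exists idfun; split; last by rewrite /= subrr; exact: inI0.
by split => //= q; exists q; rewrite subrr; exact: inI0.
Qed.

Lemma pontrjagin_iso_trans n (A B C : 'M[int]_n) :
  pontrjagin_iso A B -> pontrjagin_iso B C -> pontrjagin_iso A C.
Proof.
move=> [f [[fhomog fI fIV fsurj] fp]] [g [[ghomog gI gIV gsurj] gp]].
exists (g \o f); split; first split => /=.
- by move=> d p /fhomog /ghomog.
- by move=> p /fI /gI.
- by move=> p /gIV /fIV.
- move=> q; have [p2 hp2] := gsurj q; have [p1 hp1] := fsurj p2.
  exists p1; have -> : g (f p1) - q = g (f p1 - p2) + (g p2 - q).
    by rewrite rmorphB /=; ring.
  by apply: inID => //; apply: gI.
have -> : g (f (pontrjagin A)) - pontrjagin C =
    g (f (pontrjagin A) - pontrjagin B) + (g (pontrjagin B) - pontrjagin C).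
  by rewrite rmorphB /=; ring.
by apply: inID => //; apply: gI.
Qed.

Lemma comp_mpoly_homog n (lq : n.-tuple {mpoly int[n]}) :
  (forall i, tnth lq i \is 1.-homog) ->
  forall d p, p \is d.-homog -> comp_mpoly lq p \is d.-homog.
Proof.
move=> hq d p hp; rewrite comp_mpolyE big_seq; apply: rpred_sum => m hm.
apply: dhomogZ; have -> : d = (\sum_(i < n) m i)%N.
  by rewrite -mdegE; have := dhomog_mf hp hm.
apply: (big_ind2 (fun (x : {mpoly int[n]}) (e : nat) => x \is e.-homog)).
- exact: dhomog1.
- by move=> x1 e1 x2 e2; apply: dhomogM.
- by move=> i _; have := dhomogMn (m i) (hq i); rewrite mul1n.
Qed.

Lemma comp_mpolyK (R : comNzRingType) n (lp lq : n.-tuple {mpoly R[n]}) :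
  (forall i, comp_mpoly lq (tnth lp i) = 'X_i) ->
  cancel (comp_mpoly lp) (comp_mpoly lq).
Proof.
move=> hX; elim/mpolyind => [|c m p _ _ IHp]; first by rewrite !comp_mpoly0.
rewrite !comp_mpolyD !comp_mpolyZ IHp comp_mpolyX rmorph_prod /=.
rewrite [in RHS]mpolyXE_id; congr (_ *: _ + _); apply: eq_bigr => i _.
by rewrite rmorphXn /= hX.
Qed.

Definition shear n (t i : 'I_n) (a : int) : n.-tuple {mpoly int[n]} :=
  [tuple if j == t then 'X_t + a%:MP * 'X_i else 'X_j | j < n].

Lemma comp_shearX n (t i : 'I_n) a j :
  comp_mpoly (shear t i a) 'X_j = if j == t then 'X_t + a%:MP * 'X_i else 'X_j.
Proof. by rewrite comp_mpolyXU -tnth_nth tnth_mktuple. Qed.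

Lemma comp_shear_alpha n (A : 'M[int]_n) (t i : 'I_n) a j :
  comp_mpoly (shear t i a) (alpha A j) = alpha A j + (A t j * a)%:MP * 'X_i.
Proof.
rewrite /alpha rmorph_sum /= (bigD1 t) //= [X in _ = X + _](bigD1 t) //=.
rewrite rmorphM /= comp_mpolyC comp_shearX eqxx.
rewrite (eq_bigr (fun r => (A r j)%:MP * 'X_r)); last first.
  by move=> r /negbTE hr; rewrite rmorphM /= comp_mpolyC comp_shearX hr.
rewrite mpolyCM; ring.
Qed.

Lemma shear_homog n (t i : 'I_n) a d p :
  p \is d.-homog -> comp_mpoly (shear t i a) p \is d.-homog.
Proof.
have homogX (k : 'I_n) : ('X_k : {mpoly int[n]}) \is 1.-homog.
  by rewrite dhomogX; apply/eqP; exact: mdeg1.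
apply: comp_mpoly_homog => j; rewrite tnth_mktuple; case: (j == t) => //.
by apply: rpredD => //; rewrite mul_mpolyC; apply: dhomogZ.
Qed.

Lemma shearK n (t i : 'I_n) a : i != t ->
  cancel (comp_mpoly (shear t i a)) (comp_mpoly (shear t i (- a))).
Proof.
move=> neq_it; apply: comp_mpolyK => j; rewrite tnth_mktuple.
case: eqP => [->|/eqP/negbTE neq_jt]; last by rewrite comp_shearX neq_jt.
rewrite rmorphD rmorphM /= comp_mpolyC !comp_shearX eqxx (negbTE neq_it).
rewrite mpolyCN.
ring.
Qed.

(* The correction added to row i so that x_t |-> x_t + a x_i becomes an
   isomorphism; its entry at column t turns alpha_t into alpha_t - 2a x_i. *)
Definition shear_row n (A : 'M[int]_n) (t : 'I_n) (a : int) (c : 'I_n) : int :=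
  if c == t then - (a * 2) else if (t < c)%N then A t c * a else 0.

Lemma shear_row_lt n (A : 'M[int]_n) (t c : 'I_n) a :
  (c < t)%N -> shear_row A t a c = 0.
Proof.
by move=> lt_ct; rewrite /shear_row -val_eqE ltn_eqF //= ltnNge ltnW.
Qed.

Definition shear_mx n (A : 'M[int]_n) (t i : 'I_n) (a : int) : 'M[int]_n :=
  \matrix_(r, c) (A r c + (r == i)%:R * shear_row A t a c).

Lemma alpha_shear_mx n (A : 'M[int]_n) t i a j :
  alpha (shear_mx A t i a) j = alpha A j + (shear_row A t a j)%:MP * 'X_i.
Proof.
rewrite /alpha (eq_bigr (fun r => (A r j)%:MP * 'X_r +
    ((r == i)%:R * shear_row A t a j)%:MP * 'X_r)); last first.
  by move=> r _; rewrite mxE mpolyCD mulrDl.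
rewrite big_split /=; congr (_ + _).
rewrite (bigD1 i) //= eqxx mul1r big1 ?addr0 // => r /negbTE ->.
by rewrite mul0r mpolyC0 mul0r.
Qed.

Section Shear.
Variables (n : nat) (A : 'M[int]_n) (t i : 'I_n) (a : int) (e : {mpoly int[n]}).
Hypothesis lt_it : (i < t)%N.
Hypothesis upperA : strictly_upper A.
Hypothesis shear_rel :
  a%:MP * 'X_i * (a%:MP * 'X_i - alpha A t) = e * relator A i.

Local Notation B := (shear_mx A t i a).
Local Notation phi := (comp_mpoly (shear t i a)).

Let neq_it : i != t. Proof. by rewrite neq_ltn lt_it. Qed.

Lemma alpha_shear_mx_neq j : j != t -> alpha B j = phi (alpha A j).
Proof.
rewrite alpha_shear_mx comp_shear_alpha /shear_row => /negbTE ->.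
by case: ltnP => // le_jt; rewrite upperA // (mul0r a).
Qed.

Lemma alpha_shear_mx_eq : alpha B t = alpha A t - (a * 2)%:MP * 'X_i.
Proof. by rewrite alpha_shear_mx /shear_row eqxx mpolyCN mulNr. Qed.

Lemma comp_shear_alpha_eq : phi (alpha A t) = alpha A t.
Proof. by rewrite comp_shear_alpha upperA // mul0r mpolyC0 mul0r addr0. Qed.

Lemma relator_shear_mx : relator B i = relator A i.
Proof.
by rewrite /relator alpha_shear_mx shear_row_lt // mpolyC0 mul0r addr0.
Qed.

Lemma inI_comp_shear_relator j : inI B (phi (relator A j)).
Proof.
rewrite /relator rmorphB rmorphXn rmorphM /= !comp_shearX.
case: eqP => [->|/eqP neq_jt]; last first.
  by rewrite -alpha_shear_mx_neq //; exact: inI_relator.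
have -> : ('X_t + a%:MP * 'X_i) ^+ 2 - phi (alpha A t) * ('X_t + a%:MP * 'X_i)
    = relator B t + e * relator B i.
  by rewrite relator_shear_mx -shear_rel comp_shear_alpha_eq /relator
             alpha_shear_mx_eq mpolyCM; ring.
by apply: inID; [|apply: inIMl]; exact: inI_relator.
Qed.

Lemma inI_comp_shear_pontrjagin : inI B (phi (pontrjagin A) - pontrjagin B).
Proof.
rewrite /pontrjagin rmorph_prod /=; apply: inI_prodB => j _.
rewrite rmorphD rmorphXn rmorph1 /=.
case: (eqVneq j t) => [->|neq_jt]; last first.
  by rewrite -alpha_shear_mx_neq // subrr; exact: inI0.
have -> : 1 + phi (alpha A t) ^+ 2 - (1 + alpha B t ^+ 2) =
    (- 4%:R * e) * relator B i.
  by rewrite relator_shear_mx -mulrA -shear_rel comp_shear_alpha_eq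
             alpha_shear_mx_eq mpolyCM; ring.
by apply: inIMl; exact: inI_relator.
Qed.

Lemma shear_mx_upper : strictly_upper B.
Proof.
move=> r c le_cr; rewrite mxE upperA //; case: eqP => [eq_ri|]; last first.
  by rewrite mul0r addr0.
by rewrite shear_row_lt ?mulr0 ?addr0 // (leq_ltn_trans le_cr) // eq_ri.
Qed.

Lemma shear_rel_shear_mx :
  (- a)%:MP * 'X_i * ((- a)%:MP * 'X_i - alpha B t) = (- e) * relator B i.
Proof.
rewrite relator_shear_mx alpha_shear_mx_eq mulNr -shear_rel mpolyCN mpolyCM.
ring.
Qed.

Lemma shear_mxK : shear_mx B t i (- a) = A.
Proof.
apply/matrixP => r c; rewrite !mxE /shear_row.
have -> : B t c = A t c by rewrite mxE eq_sym (negbTE neq_it) mul0r addr0.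
case: (r == i); last by rewrite !mul0r !addr0.
by case: (c == t); case: (t < c)%N; ring.
Qed.

End Shear.

Lemma shear_pontrjagin_iso n (A : 'M[int]_n) (t i : 'I_n) a e :
  (i < t)%N -> strictly_upper A ->
  a%:MP * 'X_i * (a%:MP * 'X_i - alpha A t) = e * relator A i ->
  pontrjagin_iso A (shear_mx A t i a).
Proof.
move=> lt_it upperA shear_rel; have neq_it : i != t by rewrite neq_ltn lt_it.
have inI_back := inI_comp_shear_relator lt_it (shear_mx_upper a lt_it upperA)
  (shear_rel_shear_mx lt_it shear_rel).
rewrite (shear_mxK A a lt_it) in inI_back.
exists (comp_mpoly (shear t i a)); split.
  split.
  - by move=> d p; exact: shear_homog.
  - exact/inI_rmorph/(inI_comp_shear_relator lt_it upperA shear_rel).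
  - by move=> p /(inI_rmorph inI_back); rewrite /= (shearK a neq_it).
  - move=> q; exists (comp_mpoly (shear t i (- a)) q).
    have := shearK (- a) neq_it q; rewrite opprK /= => ->.
    by rewrite subrr; exact: inI0.
exact: inI_comp_shear_pontrjagin lt_it upperA shear_rel.
Qed.

Lemma coef_alphaQ n (B : 'M[int]_n) j r :
  (alphaQ B j)@_U_(r) = ((B r j)%:~R : rat).
Proof.
rewrite /alphaQ (raddf_sum (mcoeff U_(r))) (bigD1 r) //= mcoeffZ mcoeffXU eqxx.
rewrite mulr1 big1 ?addr0 // => k /negbTE neq_kr.
by rewrite mcoeffZ mcoeffXU neq_kr mulr0.
Qed.

Lemma coef_yQ n (B : 'M[int]_n) i r :
  (yQ B i)@_U_(r) = (i == r)%:R - 2%:R^-1 * ((B r i)%:~R : rat).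
Proof. by rewrite /yQ mcoeffB mcoeffXU mcoeffZ coef_alphaQ. Qed.

Lemma even_exceptional_col n (B : 'M[int]_n) j : even_exceptional B j ->
  exists (i : 'I_n) (k : int), [/\ (i < j)%N, k != 0 &
    forall r, B r j = k * 2 * (r == i)%:R - k * B r i].
Proof.
move=> [i [c [lt_ij [c_neq0 [/dvdzP [k cE] alphaE]]]]].
exists i, k; split => //.
  by apply: contraNneq c_neq0 => k0; rewrite cE k0 mul0r.
move=> r; have := congr1 (mcoeff U_(r)) alphaE.
rewrite mcoeffZ coef_alphaQ coef_yQ cE => coefE.
apply: (@intr_inj rat); rewrite coefE eq_sym.
by case: eqP => _; rewrite ?mulr1 ?mulr0 ?mul0r !(intrD, intrM, intrB) /=; field.
Qed.

Lemma even_exceptional_eq_cols n (A B : 'M[int]_n) (j : 'I_n) :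
  (forall r c : 'I_n, (c <= j)%N -> B r c = A r c) ->
  even_exceptional B j -> even_exceptional A j.
Proof.
move=> eq_cols [i [c [lt_ij cE]]]; exists i, c; split => //.
have alphaQE (l : 'I_n) : (l <= j)%N -> alphaQ B l = alphaQ A l.
  by move=> le_lj; apply: eq_bigr => r _; rewrite eq_cols.
by rewrite /yQ -!alphaQE // ltnW.
Qed.

Lemma alpha_of_col n (A : 'M[int]_n) t i k :
  (forall r, A r t = k * 2 * (r == i)%:R - k * A r i) ->
  alpha A t = (k * 2)%:MP * 'X_i - k%:MP * alpha A i.
Proof.
move=> colE.
have -> : (k * 2)%:MP * 'X_i = \sum_(r < n) (k * 2 * (r == i)%:R)%:MP * 'X_r.
  rewrite (bigD1 i) //= eqxx mulr1 big1 ?addr0 // => r /negbTE ->.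
  by rewrite mulr0 mpolyC0 mul0r.
rewrite /alpha mulr_sumr -sumrB; apply: eq_bigr => r _.
by rewrite colE mpolyCB mpolyCM; ring.
Qed.

(* One shear replaces column t by -k times column i, which vanishes from
   row i on. *)
Lemma even_exceptional_shear n (A : 'M[int]_n) (t : 'I_n) m :
  strictly_upper A -> (forall r : 'I_n, (m <= r)%N -> A r t = 0) ->
  even_exceptional A t ->
  exists2 m' : nat, (m' < m)%N & exists B : 'M[int]_n,
    [/\ pontrjagin_iso A B, strictly_upper B,
        forall r c : 'I_n, (c < t)%N -> B r c = A r c
      & forall r : 'I_n, (m' <= r)%N -> B r t = 0].
Proof.
move=> upperA col_vanish /even_exceptional_col [i [k [lt_it k_neq0 colE]]].
exists i.
  rewrite ltnNge; apply/negP => /col_vanish /eqP.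
  by rewrite colE eqxx upperA // mulr0 subr0 mulr1 mulf_eq0 (negbTE k_neq0).
have shear_rel : k%:MP * 'X_i * (k%:MP * 'X_i - alpha A t) =
    - (k%:MP * k%:MP) * relator A i.
  by rewrite (alpha_of_col colE) /relator mpolyCM; ring.
exists (shear_mx A t i k); split.
- exact: shear_pontrjagin_iso shear_rel.
- exact: shear_mx_upper.
- by move=> r c lt_ct; rewrite mxE shear_row_lt // mulr0 addr0.
- move=> r le_ir; rewrite mxE colE /shear_row eqxx (upperA r i le_ir).
  by rewrite mulr0 subr0 mulrN mulrC subrr.
Qed.

Lemma clear_column n (t : 'I_n) m (A : 'M[int]_n) :
  strictly_upper A -> (forall r : 'I_n, (m <= r)%N -> A r t = 0) ->
  (forall j : 'I_n, (j < t)%N -> ~ even_exceptional A j) ->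
  exists B : 'M[int]_n, [/\ pontrjagin_iso A B, strictly_upper B &
    forall j : 'I_n, (j <= t)%N -> ~ even_exceptional B j].
Proof.
elim/ltn_ind: m A => m IHm A upperA col_vanish not_eeA.
have [eeAt|not_eeAt] := classic (even_exceptional A t); last first.
  exists A; split => //; first exact: pontrjagin_iso_refl.
  move=> j; rewrite leq_eqVlt => /orP [/eqP/val_inj -> //|]; exact: not_eeA.
have [m' lt_m'm [B [isoAB upperB eq_cols col_vanishB]]] :=
  even_exceptional_shear upperA col_vanish eeAt.
have not_eeB (j : 'I_n) : (j < t)%N -> ~ even_exceptional B j.
  move=> lt_jt eeBj; apply: (not_eeA j lt_jt).
  apply: (even_exceptional_eq_cols _ eeBj) => r c le_cj.
  exact/eq_cols/(leq_ltn_trans le_cj).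
have [C [isoBC upperC not_eeC]] := IHm m' lt_m'm B upperB col_vanishB not_eeB.
by exists C; split => //; exact: pontrjagin_iso_trans isoBC.
Qed.

Lemma clear_columns n s (A : 'M[int]_n) : strictly_upper A ->
  exists B : 'M[int]_n, [/\ pontrjagin_iso A B, strictly_upper B &
    forall j : 'I_n, (j < s)%N -> ~ even_exceptional B j].
Proof.
elim: s => [|s IHs] upperA.
  by exists A; split; first exact: pontrjagin_iso_refl.
have [B [isoAB upperB not_eeB]] := IHs upperA.
have [lt_sn|le_ns] := ltnP s n; last first.
  by exists B; split => // j lt_js; apply/not_eeB/(leq_trans (ltn_ord j)).
have col_vanish (r : 'I_n) : (n <= r)%N -> B r (Ordinal lt_sn) = 0.
  by rewrite leqNgt ltn_ord.
have [C [isoBC upperC not_eeC]] := clear_column upperB col_vanish not_eeB.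
by exists C; split => //; exact: pontrjagin_iso_trans isoBC.
Qed.

Theorem lemma4p5 (n : nat) (A : 'M[int]_n) :
  strictly_upper A ->
  exists B : 'M[int]_n,
    strictly_upper B /\
    (forall j : 'I_n, ~ even_exceptional B j) /\
    exists phi : {rmorphism {mpoly int[n]} -> {mpoly int[n]}},
      graded_iso_induced A B phi /\
      inI B (phi (pontrjagin A) - pontrjagin B).
Proof.
move=> upperA; have [B [isoAB upperB not_eeB]] := clear_columns n upperA.
by exists B; split => //; split => // j; apply/not_eeB/ltn_ord.
Qed.
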